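(* Let $M,N:\Sigma\to cb(X)$ be multimeasures. Then $M$ is uniformly scalarly absolutely continuous with respect to $N$ if and only if $M$ is uniformly scalarly dominated by $N$; and if $M$ is uniformly scalarly subordinated to $N$, then $M$ is uniformly scalarly dominated by (hence uniformly scalarly absolutely continuous with respect to) $N$.
   Context: $(\Omega,\Sigma)$ is a measurable space and $X$ is a Hausdorff locally convex space with dual $X'$. $cb(X)$ is the family of nonempty closed bounded convex subsets of $X$; $s(x',C)=\sup\{\langle x',x\rangle:x\in C\}$. A multimeasure $M:\Sigma\to cb(X)$ is a map such that every $s(x',M(\cdot))$, $x'\in X'$, is a (finite, real-valued) countably additive measure. $-N$ denotes $E\mapsto\{-x:x\in N(E)\}$, so $s(x',-N(E))=s(-x',N(E))$. For a finite signed measure $\nu$, $|\nu|$ is its variation. $\Sigma_E=\{F\in\Sigma:F\subseteq E\}$, $A^c=\Omega\setminus A$, and for $S\subseteq\mathbb R$, $\overline{\mathrm{aco}}\,S$ is the closed absolutely convex hull. Quantifiers ''for all $x',y'$'' range over $X'$ (equivalently, by positive homogeneity of support functions, over the unit ball $B_{X'}$ when $X$ is normed). (usac) $M$ is uniformly scalarly absolutely continuous w.r.t. $N$ if there exists $A\in\Sigma$ such that for every $\varepsilon>0$ there is $\delta>0$ such that for all $\alpha,\beta\in\mathbb R$, all $x',y'$ and all $E\in\Sigma$: if $|\alpha s(x',N)+\beta s(y',N)|(E\cap A)+|\alpha s(x',-N)+\beta s(y',-N)|(E\cap A^c)\le\delta$ then $|\alpha s(x',M)+\beta s(y',M)|(E)\le\varepsilon$.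 (usd) $M$ is uniformly scalarly dominated by $N$ if there exist $c\in\mathbb R$ and $A\in\Sigma$ such that for all $\alpha,\beta,x',y',E$: $|\alpha s(x',M)+\beta s(y',M)|(E)\le c|\alpha s(x',N)+\beta s(y',N)|(E\cap A)+c|\alpha s(x',-N)+\beta s(y',-N)|(E\cap A^c)$. (uss) $M$ is uniformly scalarly subordinated to $N$ if there exist $d\ge0$ and $A\in\Sigma$ such that for all $\alpha,\beta,x',y',E$: $\alpha s(x',M(E))+\beta s(y',M(E))\in d\,\overline{\mathrm{aco}}\{\alpha s(x',N(F\cap A))+\beta s(y',N(F\cap A)):F\in\Sigma_E\}+d\,\overline{\mathrm{aco}}\{\alpha s(x',-N(F\cap A^c))+\beta s(y',-N(F\cap A^c)):F\in\Sigma_E\}$. *)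

From HB Require Import structures.
From mathcomp Require Import all_boot all_order all_algebra.
From mathcomp Require Import all_classical all_reals all_analysis.
Set Implicit Arguments. Unset Strict Implicit. Unset Printing Implicit Defensive.
Import Order.TTheory GRing.Theory Num.Theory.
Import numFieldNormedType.Exports.
Local Open Scope classical_set_scope.
Local Open Scope ring_scope.

Section Defs.
Variable R : realType.

Section Space.
Variable X : tvsType R.

Definition in_dual (f : X -> R) : Prop :=
  (forall (a : R) (x y : X), f (a *: x + y) = a * f x + f y) /\ continuous f.

Definition tvs_bounded (A : set X) : Prop :=
  forall U : set X, nbhs (0 : X) U ->
    exists r : R, 0 < r /\
      forall t : R, r < `|t| -> A `<=` [set t *: u | u in U].

Definition cb (C : set X) : Prop :=
  C !=set0 /\ closed C /\ tvs_bounded C /\ convex_set (C : set (convex_lmodType X)).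

Definition supp (f : X -> R) (C : set X) : R := sup [set f x | x in C].

Definition negset (C : set X) : set X := [set - x | x in C].

End Space.

Section Meas.
Context {d : measure_display} {T : measurableType d}.

Definition count_add (nu : set T -> R) : Prop :=
  forall F : nat -> set T, (forall n, measurable (F n)) -> trivIset setT F ->
    (fun n => \sum_(i < n) nu (F i)) @ \oo --> nu (\bigcup_n F n).

Definition multimeasure (X : tvsType R) (M : set T -> set X) : Prop :=
  (forall E, measurable E -> cb (M E)) /\
  (forall f : X -> R, in_dual f -> count_add (fun E => supp f (M E))).

Definition variation (nu : set T -> R) (E : set T) : \bar R :=
  ereal_sup [set x | exists (n : nat) (F : 'I_n -> set T),
     (forall i, measurable (F i)) /\ trivIset setT F /\
     \bigcup_i F i = E /\ x = (\sum_(i < n) `|nu (F i)|)%:E].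

Definition comb (X : tvsType R) (a b : R) (f g : X -> R) (M : set T -> set X)
  : set T -> R := fun E => a * supp f (M E) + b * supp g (M E).

Definition negmm (X : tvsType R) (N : set T -> set X) : set T -> set X :=
  fun E => negset (N E).

Definition usac (X : tvsType R) (M N : set T -> set X) : Prop :=
  exists A : set T, measurable A /\
  forall eps : R, 0 < eps -> exists delta : R, 0 < delta /\
  forall (a b : R) (f g : X -> R) (E : set T),
    in_dual f -> in_dual g -> measurable E ->
    (variation (comb a b f g N) (E `&` A)
       + variation (comb a b f g (negmm N)) (E `&` ~` A) <= delta%:E)%E ->
    (variation (comb a b f g M) E <= eps%:E)%E.

Definition usd (X : tvsType R) (M N : set T -> set X) : Prop :=
  exists (c : R) (A : set T), measurable A /\
  forall (a b : R) (f g : X -> R) (E : set T),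
    in_dual f -> in_dual g -> measurable E ->
    (variation (comb a b f g M) E <=
       c%:E * variation (comb a b f g N) (E `&` A)
       + c%:E * variation (comb a b f g (negmm N)) (E `&` ~` A))%E.

End Meas.

Definition aco (S : set R) : set R :=
  [set x | exists (n : nat) (s l : 'I_n -> R),
     (forall i, S (s i)) /\ \sum_(i < n) `|l i| <= 1 /\
     x = \sum_(i < n) l i * s i].

Definition caco (S : set R) : set R := closure (aco S).

Definition scaled_sum (c : R) (A B : set R) : set R :=
  [set x | exists a b, A a /\ B b /\ x = c * a + c * b].

Definition uss {d : measure_display} {T : measurableType d} (X : tvsType R)
  (M N : set T -> set X) : Prop :=
  exists (c : R) (A : set T), 0 <= c /\ measurable A /\
  forall (a b : R) (f g : X -> R) (E : set T),
    in_dual f -> in_dual g -> measurable E ->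
    scaled_sum c
      (caco [set comb a b f g N (F `&` A) | F in [set F | measurable F /\ F `<=` E]])
      (caco [set comb a b f g (negmm N) (F `&` ~` A)
               | F in [set F | measurable F /\ F `<=` E]])
      (comb a b f g M E).

End Defs.

From Pilot Require Import Defs.
From HB Require Import structures.
From mathcomp Require Import all_boot all_order all_algebra.
From mathcomp Require Import all_classical all_reals all_analysis.
From mathcomp Require Import ring lra.
Import Order.TTheory GRing.Theory Num.Theory.
Import numFieldNormedType.Exports.
Set Implicit Arguments. Unset Strict Implicit.
Local Open Scope classical_set_scope.
Local Open Scope ring_scope.

(* None of the three implications
   uses the multimeasure structure: they only use elementary properties of the
   variation |nu|(E) of a real set function, so everything is proved for
   arbitrary set-valued maps M, N.

   - Variation: |nu|(D) dominates the sum of |nu(G_i)| over disjoint measurable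
     pieces G_i of D, is nonnegative, and is positively homogeneous in nu.
   - usd -> usac: with a positive domination constant c, take delta = eps / c.
   - usac -> usd: apply usac with eps = 1 to a rescaled combination
     lam * (alpha s(x',.) + beta s(y',.)) with lam chosen so that its
     N-variation is at most delta; homogeneity gives the constant 1 / delta.
   - uss -> usd: a point of the closed absolutely convex hull of a set S of
     reals has modulus at most sup |S|; approximating these suprema on the
     pieces of a partition of E bounds sum_i |m(G_i)| by the N-variations. *)

(* Defs.variation is shadowed by the charge variation of the analysis library. *)
Local Notation variation := Pilot.Defs.variation.

Section Variation.
Variables (R : realType) (d : measure_display) (T : measurableType d).
Implicit Types (nu : set T -> R) (D : set T).

(* A finite disjoint family of measurable subsets of D, completed by the
   remainder of D into a partition, witnesses a lower bound on |nu|(D). *)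
Lemma variation_ge_partition nu D n (G : 'I_n -> set T) :
  measurable D -> (forall i, measurable (G i)) -> trivIset setT G ->
  (forall i, G i `<=` D) ->
  ((\sum_(i < n) `|nu (G i)|)%:E <= variation nu D)%E.
Proof.
move=> mD mG tG GD.
pose U := \bigcup_(i in [set: 'I_n]) G i.
have mU : measurable U by apply: fin_bigcup_measurable => //; exact: finite_finset.
pose H (j : 'I_n.+1) := if unlift ord_max j is Some i then G i else D `\` U.
have HG (i : 'I_n) : H (lift ord_max i) = G i by rewrite /H liftK.
apply: (@le_trans _ _ (\sum_(j < n.+1) `|nu (H j)|)%:E).
  rewrite lee_fin big_ord_recr /= -[leLHS]addr0 lerD // le_eqVlt; apply/orP; left.
  apply/eqP/eq_bigr => i _; rewrite -HG; congr (`|nu (H _)|).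
  by apply: val_inj; rewrite /= /bump leqNgt ltn_ord.
apply: ereal_sup_ubound; exists n.+1, H; split; [|split; [|split]] => //.
- by move=> j; rewrite /H; case: unliftP => [i _|_] //; exact: measurableD.
- move=> j k _ _; rewrite /H.
  case: unliftP => [i ->|->]; case: unliftP => [i' ->|->] //.
  + by move=> /(tG _ _ I I) ->.
  + by case=> x [Gx [_ nU]]; exfalso; apply: nU; exists i.
  + by case=> x [[_ nU] Gx]; exfalso; apply: nU; exists i'.
- apply/seteqP; split => x.
  + by case=> j _; rewrite /H; case: unliftP => [i _|_] //; [apply: GD|case].
  + move=> Dx; have [[i _ Gi]|nU] := pselect (U x).
    * by exists (lift ord_max i) => //; rewrite HG.
    * by exists ord_max => //; rewrite /H unlift_none.
Qed.

(* The empty family gives the trivial lower bound. *)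
Lemma variation_ge0 nu D : measurable D -> (0 <= variation nu D)%E.
Proof.
move=> mD; have := @variation_ge_partition nu D 0 (fun _ => set0) mD.
by rewrite big_ord0; apply => //; case.
Qed.

(* Each partition sum of lam nu is lam times one of nu. *)
Lemma variation_scale_le nu (lam : R) D : 0 < lam ->
  (variation (fun F => (lam * nu F)%R) D <= lam%:E * variation nu D)%E.
Proof.
move=> lam0; apply: ge_ereal_sup => _ [n [F [mF [tF [UF ->]]]]].
rewrite (_ : \sum_(i < n) _ = lam * \sum_(i < n) `|nu (F i)|); last first.
  by rewrite mulr_sumr; apply: eq_bigr => i _; rewrite normrM gtr0_norm.
rewrite EFinM; apply: lee_wpmul2l; first by rewrite lee_fin ltW.
by apply: ereal_sup_ubound; exists n, F.
Qed.

Lemma variationZ nu (lam : R) D : 0 < lam ->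
  variation (fun F => lam * nu F) D = (lam%:E * variation nu D)%E.
Proof.
move=> lam0; apply/eqP; rewrite eq_le variation_scale_le //=.
have lamV0 : 0 < lam^-1 by rewrite invr_gt0.
have -> : variation nu D = variation (fun F => lam^-1 * (lam * nu F)) D.
  by congr variation; apply/funext => F; rewrite mulKf ?gt_eqF.
apply: le_trans (lee_wpmul2l _ (variation_scale_le _ _ lamV0)) _.
  by rewrite lee_fin ltW.
by rewrite muleA -EFinM divff ?gt_eqF // mul1e.
Qed.

End Variation.

Lemma variation_combZ (R : realType) (d : measure_display) (T : measurableType d)
  (X : tvsType R) (lam a b : R) (f g : X -> R) (M : set T -> set X) D :
  0 < lam ->
  variation (comb (lam * a) (lam * b) f g M) D
  = (lam%:E * variation (comb a b f g M) D)%E.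
Proof.
move=> lam0; rewrite -variationZ //; congr variation.
by apply/funext => F; rewrite /comb mulrDr !mulrA.
Qed.

(* To bound u by c v + c w (v, w nonnegative extended reals, c > 0) it
   suffices to treat finite v, w; otherwise the right-hand side is +oo. *)
Lemma lee_split_bound (R : realType) (c : R) (u v w : \bar R) :
  0 < c -> (0 <= v)%E -> (0 <= w)%E ->
  (forall x y : R, 0 <= x -> 0 <= y -> v = x%:E -> w = y%:E ->
     (u <= (c * (x + y))%:E)%E) ->
  (u <= c%:E * v + c%:E * w)%E.
Proof.
move=> c0; have cy : (c%:E * +oo = +oo :> \bar R)%E by rewrite gt0_muley ?lte_fin.
case: v => [x||] //; case: w => [y||] // x0 y0 Hu.
- by rewrite -!EFinM -EFinD -mulrDr; apply: Hu; rewrite -?lee_fin.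
- by rewrite cy addey ?leey.
- by rewrite cy addye ?leey.
- by rewrite cy addye ?leey.
Qed.

Lemma caco_norm_le (R : realType) (S : set R) (r z : R) : 0 <= r ->
  (forall s, S s -> `|s| <= r) -> caco S z -> `|z| <= r.
Proof.
move=> r0 Sb; have cl : closed [set x : R | `|x| <= r].
  have -> : [set x : R | `|x| <= r] = [set x | - r <= x] `&` [set x | x <= r].
    by apply/seteqP; split => x /=; rewrite ler_norml => /andP.
  exact: closedI (@closed_ge _ _) (@closed_le _ _).
suff sub : aco S `<=` [set x : R | `|x| <= r].
  by move=> /(closureS sub); rewrite -(proj1 (closure_id _) cl).
move=> _ [n [s [l [Ss [sl ->]]]]].
apply: (le_trans (ler_norm_sum _ _ _)).
apply: (@le_trans _ _ (\sum_(i < n) `|l i| * r)).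
  by apply: ler_sum => i _; rewrite normrM ler_wpM2l // Sb.
by rewrite -mulr_suml; apply: (le_trans (ler_wpM2r r0 sl)); rewrite mul1r.
Qed.

Lemma caco_approx (R : realType) (S : set R) (z eps : R) :
  S !=set0 -> 0 < eps -> caco S z -> exists2 s, S s & `|z| - eps < `|s|.
Proof.
move=> [s0 Ss0] eps0 Sz; apply: contrapT => none.
have Sb s : S s -> `|s| <= `|z| - eps.
  by move=> Ss; rewrite leNgt; apply/negP => lt; apply: none; exists s.
have := caco_norm_le (le_trans (normr_ge0 _) (Sb _ Ss0)) Sb Sz; lra.
Qed.

Section Domination.
Variables (R : realType) (d : measure_display) (T : measurableType d).
Variable X : tvsType R.
Implicit Types (M N : set T -> set X).

Lemma usd_pos M N : usd M N -> exists c A, 0 < c /\ measurable A /\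
  forall (a b : R) (f g : X -> R) (E : set T),
    in_dual f -> in_dual g -> measurable E ->
    (variation (comb a b f g M) E <=
       c%:E * variation (comb a b f g N) (E `&` A)
       + c%:E * variation (comb a b f g (negmm N)) (E `&` ~` A))%E.
Proof.
move=> [c [A [mA Hc]]]; exists (`|c| + 1), A; split; [by rewrite ltr_wpDl|split=> //].
move=> a b f g E fd gd mE; apply: le_trans (Hc a b f g E fd gd mE) _.
have le_c : (c%:E <= (`|c| + 1)%:E)%E by rewrite lee_fin ler_wpDr ?ler_norm.
rewrite leeD // lee_wpmul2r // variation_ge0 //; apply: measurableI => //.
exact: measurableC.
Qed.

Lemma usd_usac M N : usd M N -> usac M N.
Proof.
move=> /usd_pos [c [A [c0 [mA Hc]]]]; exists A; split => // eps eps0.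
exists (eps / c); split=> [|a b f g E fd gd mE small]; first exact: divr_gt0.
have mAc : measurable (~` A) by exact: measurableC.
apply: le_trans (Hc a b f g E fd gd mE) _.
rewrite -ge0_muleDr ?variation_ge0 //; try exact: measurableI.
apply: le_trans (lee_wpmul2l _ small) _; first by rewrite lee_fin ltW.
by rewrite -EFinM mulrC divfK ?gt_eqF.
Qed.

Lemma usac_usd M N : usac M N -> usd M N.
Proof.
move=> [A [mA Hac]]; have [delta [delta0 Hdelta]] := Hac 1 ltr01.
exists delta^-1, A; split => // a b f g E fd gd mE.
have mEA : measurable (E `&` A) by exact: measurableI.
have mEAc : measurable (E `&` ~` A) by apply: measurableI => //; exact: measurableC.
apply: lee_split_bound; rewrite ?invr_gt0 ?variation_ge0 //.
move=> x y x0 y0 Vx Vy; apply/lee_addgt0Pr => e e0.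
have xye0 : 0 < x + y + e * delta by rewrite ltr_wpDl ?addr_ge0 ?mulr_gt0.
(* lam rescales the combination so that its N-variation is at most delta. *)
pose lam := delta / (x + y + e * delta).
have lam0 : 0 < lam by exact: divr_gt0.
have scaledM : (lam%:E * variation (comb a b f g M) E <= 1%:E)%E.
  rewrite -variation_combZ //; apply: Hdelta => //.
  rewrite !variation_combZ // Vx Vy -!EFinM -EFinD lee_fin -mulrDr.
  rewrite /lam mulrAC ler_pdivrMr // ler_wpM2l ?ltW //.
  by rewrite ltrDl mulr_gt0.
rewrite -[variation _ _]mul1e -(mulVf (lt0r_neq0 lam0)) EFinM -muleA.
apply: le_trans (lee_wpmul2l _ scaledM) _; first by rewrite lee_fin invr_ge0 ltW.
rewrite -EFinM -EFinD lee_fin /lam invf_div mulr1 le_eqVlt; apply/orP; left.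
by apply/eqP; field; rewrite gt_eqF.
Qed.

Lemma sum_caco_le_variation (nu : set T -> R) (B E : set T) (x : R)
    n (G : 'I_n -> set T) (a : 'I_n -> R) :
  measurable B -> measurable E -> (forall i, measurable (G i)) ->
  trivIset setT G -> (forall i, G i `<=` E) ->
  (variation nu (E `&` B) <= x%:E)%E ->
  (forall i, caco [set nu (F `&` B) | F in [set F | measurable F /\ F `<=` G i]]
                  (a i)) ->
  \sum_(i < n) `|a i| <= x.
Proof.
move=> mB mE mG tG GE Vx Ga; apply/ler_addgt0Pr => e e0.
pose eps := e / n.+1%:R.
have eps0 : 0 < eps by apply: divr_gt0.
have pick i : exists F, (measurable F /\ F `<=` G i) /\
    `|a i| - eps < `|nu (F `&` B)|.
  have [|_ [F GF <-] lt] := caco_approx _ eps0 (Ga i); last by exists F.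
  by exists (nu (set0 `&` B)), set0; split => //; exact: sub0set.
have [F /all_and2 [/all_and2 [mF FG] approx]] := choice pick.
have sumF : \sum_(i < n) `|nu (F i `&` B)| <= x.
  rewrite -lee_fin; apply: le_trans Vx; apply: variation_ge_partition.
  - exact: measurableI.
  - by move=> i; exact: measurableI.
  - move=> i j _ _ [y [[Fi _] [Fj _]]]; apply: tG => //.
    by exists y; split; [apply: FG Fi|apply: FG Fj].
  - by move=> i y [/FG/GE Ey By]; split.
apply: (@le_trans _ _ (\sum_(i < n) (`|nu (F i `&` B)| + eps))).
  by apply: ler_sum => i _; have := approx i; lra.
rewrite big_split /= sumr_const card_ord lerD //.
rewrite -mulr_natr /eps mulrAC ler_pdivrMr ?ltr0Sn // ler_wpM2l ?(ltW e0) //.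
by rewrite ler_nat.
Qed.

Lemma uss_usd M N : uss M N -> usd M N.
Proof.
move=> [c [A [c0 [mA Hss]]]]; exists (c + 1), A; split => // a b f g E fd gd mE.
have mAc : measurable (~` A) by exact: measurableC.
apply: lee_split_bound; rewrite ?ltr_wpDl ?variation_ge0 //; try exact: measurableI.
move=> x y x0 y0 Vx Vy.
apply: (@le_trans _ _ (c * (x + y))%:E); last first.
  by rewrite lee_fin ler_wpM2r ?addr_ge0 ?lerDl.
apply: ge_ereal_sup => _ [n [G [mG [tG [UG ->]]]]]; rewrite lee_fin.
have GE i : G i `<=` E by rewrite -UG => z Gz; exists i.
(* decompose each m(G_i) = c a_i + c b_i as provided by uss on G_i *)
have [al hal] := choice (fun i => Hss a b f g (G i) fd gd (mG i)).
have [bl /all_and2 [Gal /all_and2 [Gbl Gab]]] := choice hal.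
have sum_al : \sum_(i < n) `|al i| <= x.
  by apply: (sum_caco_le_variation mA mE mG tG GE _ Gal); rewrite Vx.
have sum_bl : \sum_(i < n) `|bl i| <= y.
  by apply: (sum_caco_le_variation mAc mE mG tG GE _ Gbl); rewrite Vy.
apply: (@le_trans _ _ (\sum_(i < n) (c * `|al i| + c * `|bl i|))).
  apply: ler_sum => i _; rewrite Gab.
  by apply: (le_trans (ler_normD _ _)); rewrite !normrM ger0_norm.
by rewrite big_split /= -!mulr_sumr -mulrDr ler_wpM2l // lerD.
Qed.

End Domination.

(* Proposition 4.3. *)
Theorem proposition4p3 (R : realType) (d : measure_display) (T : measurableType d)
  (X : tvsType R) (M N : set T -> set X) :
  hausdorff_space X -> multimeasure M -> multimeasure N ->
  (usac M N <-> usd M N) /\ (uss M N -> usd M N).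
Proof.
move=> _ _ _; split; last exact: uss_usd.
by split; [exact: usac_usd|exact: usd_usac].
Qed.
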